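(* Let $\kappa,\lambda$ be regular infinite cardinals with $\kappa\vartriangleleft\lambda=\lambda^{<\lambda}$, and let $(\mathcal{C},E)$ be a $\kappa$-site such that $\mathcal{C}$ has fewer than $\lambda$ morphisms and $|E|<\lambda$. For $x\in\mathcal{C}$ let $ev_x\in\mathbf{Set}^{Mod(\mathcal{C})_{<\lambda}}$ be the functor $M\mapsto M(x)$. Then the closure of $\{ev_x: x\in\mathcal{C}\}$ in $\mathbf{Set}^{Mod(\mathcal{C})_{<\lambda}}$ under limits of $\kappa$-cofiltered diagrams with fewer than $\lambda$ morphisms is a generating set of $\mathbf{Set}^{Mod(\mathcal{C})_{<\lambda}}$.
   Context: ''$<\kappa$-limits'' are limits of diagrams with fewer than $\kappa$ morphisms; $\kappa$-lex means having/preserving them. $\kappa\vartriangleleft\lambda$ means: for every set $X$ with $|X|<\lambda$ the poset of subsets of $X$ of size $<\kappa$ has a cofinal subset of size $<\lambda$. A family is a set of morphisms with common codomain. A $\kappa$-site is a pair $(\mathcal{C},E)$ with $\mathcal{C}$ a small $\kappa$-lex category and $E$ a set of families containing $id:1\to1$. $Mod(\mathcal{C})$ is the category of $\kappa$-lex functors $\mathcal{C}\to\mathbf{Set}$ sending every family in $E$ to a jointly surjective family, with all natural transformations; $Mod(\mathcal{C})_{<\lambda}$ is its full subcategory of functors $M$ with $|M(x)|<\lambda$ for all $x$. *)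

From Stdlib Require Import Classical FunctionalExtensionality.

Set Implicit Arguments.
Unset Strict Implicit.

Definition le_card (A B : Type) : Prop :=
  exists f : A -> B, forall x y, f x = f y -> x = y.

Definition lt_card (A B : Type) : Prop := le_card A B /\ ~ le_card B A.

Definition infinite_card (K : Type) : Prop := le_card nat K.

Definition regular_infinite (K : Type) : Prop :=
  infinite_card K /\
  forall (I : Type) (X : I -> Type),
    lt_card I K -> (forall i, lt_card (X i) K) -> lt_card {i : I & X i} K.

Definition lam_lt_lam_eq (L : Type) : Prop :=
  forall X : Type, lt_card X L -> le_card (X -> L) L.

Definition sharply_less (K L : Type) : Prop :=
  forall X : Type, lt_card X L ->
    exists Q : (X -> Prop) -> Prop,
      (forall S, Q S -> lt_card {x : X | S x} K) /\
      (forall S, lt_card {x : X | S x} K ->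
         exists T, Q T /\ forall x, S x -> T x) /\
      lt_card {S : X -> Prop | Q S} L.

Record PreCat := {
  ob :> Type;
  hom : ob -> ob -> Type;
  idm : forall a, hom a a;
  comp : forall a b c, hom b c -> hom a b -> hom a c
}.
Arguments hom {_} a b.
Arguments idm {_} a.
Arguments comp {_ a b c} g f.

Definition isCat (C : PreCat) : Prop :=
  (forall (a b : C) (f : hom a b), comp (idm b) f = f) /\
  (forall (a b : C) (f : hom a b), comp f (idm a) = f) /\
  (forall (a b c d : C) (f : hom a b) (g : hom b c) (h : hom c d),
      comp h (comp g f) = comp (comp h g) f).

Definition Mor (C : PreCat) : Type := {a : C & {b : C & hom a b}}.

Record Functor (C D : PreCat) := {
  fob :> C -> D;
  fmap : forall a b, hom a b -> hom (fob a) (fob b)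
}.
Arguments fmap {C D} f {a b} _.

Definition isFunctor (C D : PreCat) (F : Functor C D) : Prop :=
  (forall a : C, fmap F (idm a) = idm (F a)) /\
  (forall (a b c : C) (f : hom a b) (g : hom b c),
      fmap F (comp g f) = comp (fmap F g) (fmap F f)).

Definition fcomp (I C D : PreCat) (F : Functor C D) (G : Functor I C)
  : Functor I D :=
  {| fob := fun i => F (G i); fmap := fun i j f => fmap F (fmap G f) |}.

Definition isCone (J C : PreCat) (D : Functor J C) (a : C)
  (p : forall j, hom a (D j)) : Prop :=
  forall j k (f : hom j k), comp (fmap D f) (p j) = p k.

Arguments isCone {J C} D a p.

Definition isLimit (J C : PreCat) (D : Functor J C) (a : C)
  (p : forall j, hom a (D j)) : Prop :=
  forall (b : C) (q : forall j, hom b (D j)), isCone D b q ->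
    exists u : hom b a,
      (forall j, comp (p j) u = q j) /\
      (forall u' : hom b a, (forall j, comp (p j) u' = q j) -> u' = u).

Arguments isLimit {J C} D a p.

Definition isTerminal (C : PreCat) (t : C) : Prop :=
  forall b : C, exists u : hom b t, forall u' : hom b t, u' = u.

Definition kappa_lex_cat (K : Type) (C : PreCat) : Prop :=
  isCat C /\
  forall (J : PreCat) (D : Functor J C), isCat J -> lt_card (Mor J) K ->
    isFunctor D -> exists (a : C) (p : forall j, hom a (D j)),
      isCone D a p /\ isLimit D a p.

Definition kappa_lex_functor (K : Type) (C E : PreCat) (F : Functor C E)
  : Prop :=
  forall (J : PreCat) (D : Functor J C), isCat J -> lt_card (Mor J) K ->
    isFunctor D -> forall (a : C) (p : forall j, hom a (D j)),
      isCone D a p -> isLimit D a p ->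
      isLimit (fcomp F D) (F a) (fun j => fmap F (p j)).

Definition kappa_cofiltered (K : Type) (J : PreCat) : Prop :=
  forall (I : PreCat) (D : Functor I J), isCat I -> lt_card (Mor I) K ->
    isFunctor D -> exists (j : J) (p : forall i, hom j (D i)), isCone D j p.

Definition generating (C : PreCat) (S : C -> Prop) : Prop :=
  forall (a b : C) (f g : hom a b), f <> g ->
    exists s : C, S s /\ exists h : hom s a, comp f h <> comp g h.

Definition TypeCat : PreCat :=
  {| ob := Type; hom := fun A B => A -> B;
     idm := fun A (x : A) => x;
     comp := fun A B C (g : B -> C) (f : A -> B) (x : A) => g (f x) |}.

Unset Implicit Arguments.
Record NT (A : PreCat) (F G : Functor A TypeCat) := {
  eta : forall a : A, (F a : Type) -> (G a : Type);
  natural : forall a b (f : hom a b) (x : F a),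
      eta b (fmap F f x) = fmap G f (eta a x)
}.
Arguments NT {A} F G.
Arguments Build_NT {A F G} eta natural.
Arguments eta {A F G} n a x.
Arguments natural {A F G} n a b f x.
Set Implicit Arguments.

Definition idNT (A : PreCat) (F : Functor A TypeCat) : NT F F.
Proof. refine {| eta := fun a (x : F a) => x |}. intros; reflexivity. Defined.

Definition compNT (A : PreCat) (F G H : Functor A TypeCat)
  (m : NT G H) (n : NT F G) : NT F H.
Proof.
  refine {| eta := fun a (x : F a) => eta m a (eta n a x) |}.
  intros a b f x. rewrite (natural n). apply (natural m).
Defined.

(* A kappa-site (C, E): E is a set of families, given as an index set Eix,
   for each index a codomain cod e and the family fam e, a set of morphisms
   into cod e (a predicate on morphisms with codomain cod e). *)
Definition kappa_site (K : Type) (C : PreCat) (Eix : Type)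
  (cod : Eix -> C) (fam : forall e d, hom d (cod e) -> Prop) : Prop :=
  kappa_lex_cat K C /\
  (* E contains the family {id : 1 -> 1}, 1 a terminal object *)
  exists e : Eix, isTerminal (cod e) /\
    forall d (f : hom d (cod e)),
      fam e d f <-> existT (fun d => hom d (cod e)) d f
                    = existT (fun d => hom d (cod e)) (cod e) (idm (cod e)).

Arguments kappa_site K {C Eix} cod fam.

Record ModObj (K L : Type) (C : PreCat) (Eix : Type)
  (cod : Eix -> C) (fam : forall e d, hom d (cod e) -> Prop) := {
  mfun : Functor C TypeCat;
  mfun_functor : isFunctor mfun;
  mfun_lex : kappa_lex_functor K mfun;
  mfun_cover : forall (e : Eix) (y : mfun (cod e)),
      exists d (f : hom d (cod e)) (x : mfun d), fam e d f /\ fmap mfun f x = y;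
  mfun_small : forall x : C, lt_card (mfun x) L
}.

Arguments ModObj K L {C Eix} cod fam.
Arguments mfun {K L C Eix cod fam} m.

Definition ModCat (K L : Type) (C : PreCat) (Eix : Type)
  (cod : Eix -> C) (fam : forall e d, hom d (cod e) -> Prop) : PreCat :=
  {| ob := ModObj K L cod fam;
     hom := fun M N => NT (mfun M) (mfun N);
     idm := fun M => idNT (mfun M);
     comp := fun M N P g f => compNT g f |}.

Arguments ModCat K L {C Eix} cod fam.

Record SFObj (A : PreCat) := {
  sfun : Functor A TypeCat;
  sfun_functor : isFunctor sfun
}.

Definition FunCat (A : PreCat) : PreCat :=
  {| ob := SFObj A;
     hom := fun F G => NT (sfun F) (sfun G);
     idm := fun F => idNT (sfun F);
     comp := fun F G H g f => compNT g f |}.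

Definition ev_fun (K L : Type) (C : PreCat) (Eix : Type)
  (cod : Eix -> C) (fam : forall e d, hom d (cod e) -> Prop) (x : C)
  : Functor (ModCat K L cod fam) TypeCat :=
  @Build_Functor (ModCat K L cod fam) TypeCat
    (fun M : ModCat K L cod fam => (mfun M x : Type))
    (fun M N (h : NT (mfun M) (mfun N)) => eta h x).

Arguments ev_fun K L {C Eix} cod fam x.

Lemma ev_fun_functor (K L : Type) (C : PreCat) (Eix : Type)
  (cod : Eix -> C) (fam : forall e d, hom d (cod e) -> Prop) (x : C) :
  isFunctor (ev_fun K L cod fam x).
Proof. split; intros; reflexivity. Qed.
Arguments ev_fun_functor K L {C Eix} cod fam x.

Definition ev (K L : Type) (C : PreCat) (Eix : Type)
  (cod : Eix -> C) (fam : forall e d, hom d (cod e) -> Prop) (x : C)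
  : FunCat (ModCat K L cod fam) :=
  {| sfun := ev_fun K L cod fam x; sfun_functor := ev_fun_functor K L cod fam x |}.

Arguments ev K L {C Eix} cod fam x.

Inductive ev_closure (K L : Type) (C : PreCat) (Eix : Type)
  (cod : Eix -> C) (fam : forall e d, hom d (cod e) -> Prop)
  : FunCat (ModCat K L cod fam) -> Prop :=
| evc_base : forall x : C, ev_closure (ev K L cod fam x)
| evc_lim : forall (J : PreCat) (D : Functor J (FunCat (ModCat K L cod fam)))
      (a : FunCat (ModCat K L cod fam)) (p : forall j, hom a (D j)),
      isCat J -> kappa_cofiltered K J -> lt_card (Mor J) L ->
      isFunctor D -> (forall j, ev_closure (D j)) ->
      isCone D a p -> isLimit D a p -> ev_closure a.

Arguments ev_closure K L {C Eix} cod fam _.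

(* Two natural transformations f <> g : F -> G differ at some model M and some u in F(M).
   A pointed arrow of M is an arrow h : a -> b of C with a point x in M(a). A set S of
   fewer than kappa pointed arrows gives a kappa-small diagram in C, with a vertex for each
   pointed arrow and one for each of its endpoints (a, x) and (b, M(h) x). Every model N
   preserves its limit a_S, so the points of N(a_S) are the families of points of N at the
   endpoints that are compatible along the arrows of S; M(a_S) contains the tautological
   family. As kappa <| lambda and M has fewer than lambda pointed arrows, fewer than lambda
   such sets S are cofinal among the small ones, and they index a kappa-cofiltered diagram of
   evaluations ev_(a_S) with fewer than lambda morphisms. A point of its limit T at N reads
   off, point by point, a natural transformation M -> N, and the tautological point of T(M)
   reads off id_M. So Hom(M, -) is a retract of T, and by Yoneda u extends to some
   k : T -> F with f k <> g k. *)

From Stdlib Require Import Classical FunctionalExtensionality ProofIrrelevance ClassicalEpsilon.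
From Stdlib Require Import Program.Equality.

Set Implicit Arguments.
Unset Strict Implicit.

Lemma sig_ext (X : Type) (P : X -> Prop) (u v : sig P) : proj1_sig u = proj1_sig v -> u = v.
Proof. apply eq_sig_hprop. intros; apply proof_irrelevance. Qed.

(** * Cardinal arithmetic *)

Lemma le_card_trans (A B D : Type) : le_card A B -> le_card B D -> le_card A D.
Proof. intros [f Hf] [g Hg]. exists (fun x => g (f x)); auto. Qed.

Lemma le_lt_card (A B K : Type) : le_card A B -> lt_card B K -> lt_card A K.
Proof.
  intros HAB [HBK HKB]. split; [exact (le_card_trans HAB HBK)|].
  intro HKA. exact (HKB (le_card_trans HKA HAB)).
Qed.

Lemma lt_card_bool (K : Type) : infinite_card K -> lt_card bool K.
Proof.
  intros HK. split.
  - apply le_card_trans with nat; [|exact HK].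
    exists (fun b : bool => if b then 1 else 0). intros [] [] H; congruence.
  - intros HKb. destruct (le_card_trans HK HKb) as [g Hg].
    (* three naturals cannot be sent injectively into bool *)
    destruct (g 0) eqn:E0, (g 1) eqn:E1, (g 2) eqn:E2;
      first [ discriminate (Hg 0 1 ltac:(congruence))
            | discriminate (Hg 0 2 ltac:(congruence))
            | discriminate (Hg 1 2 ltac:(congruence)) ].
Qed.

Lemma lt_card_singleton (K X : Type) (a : X) : infinite_card K -> lt_card {x | a = x} K.
Proof.
  intros HK. apply le_lt_card with bool; [|exact (lt_card_bool HK)].
  exists (fun _ => true). intros [x Hx] [y Hy] _. subst. reflexivity.
Qed.

Section RegularCardinal.
Variables (K : Type) (HK : regular_infinite K).

Lemma lt_card_prod (A B : Type) : lt_card A K -> lt_card B K -> lt_card (A * B) K.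
Proof.
  intros HA HB. apply le_lt_card with {a : A & B}; [|exact (proj2 HK _ _ HA (fun _ => HB))].
  exists (fun p => existT (fun _ => B) (fst p) (snd p)).
  intros [a b] [a' b'] E.
  exact (f_equal2 pair (f_equal (@projT1 _ _) E) (f_equal (@projT2 _ (fun _ => B)) E)).
Qed.

Lemma lt_card_sum (A B : Type) : lt_card A K -> lt_card B K -> lt_card (A + B) K.
Proof.
  intros HA HB. apply le_lt_card with {b : bool & if b then A else B}.
  - exists (fun x => match x return {b : bool & if b then A else B} with
               | inl a => existT _ true a
               | inr b => existT _ false b end).
    intros [a|b] [a'|b'] E; try discriminate (f_equal (@projT1 _ _) E);
      apply inj_pair2 in E; subst; reflexivity.
  - apply (proj2 HK). exact (lt_card_bool (proj1 HK)). intros []; assumption.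
Qed.

Lemma lt_card_union (X I : Type) (F : I -> X -> Prop) :
  lt_card I K -> (forall i, lt_card {x | F i x} K) -> lt_card {x | exists i, F i x} K.
Proof.
  intros HI HF. apply le_lt_card with {i : I & {x | F i x}}; [|exact (proj2 HK _ _ HI HF)].
  exists (fun y : {x | exists i, F i x} =>
    let (i, Hi) := constructive_indefinite_description _ (proj2_sig y) in
    existT (fun i => {x | F i x}) i (exist _ (proj1_sig y) Hi)).
  intros [x Hx] [y Hy]; simpl.
  destruct (constructive_indefinite_description _ Hx), (constructive_indefinite_description _ Hy).
  intro E. apply subset_eq_compat. exact (f_equal (fun p => proj1_sig (projT2 p)) E).
Qed.

End RegularCardinal.

Lemma sharply_less_indexed_cofinal (K L X : Type) :
  sharply_less K L -> lt_card X L ->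
  exists (I : Type) (piece : I -> X -> Prop),
    lt_card I L /\
    (forall i, lt_card {x | piece i x} K) /\
    (forall U : X -> Prop, lt_card {x | U x} K -> exists i, forall x, U x -> piece i x).
Proof.
  intros HKL HX.
  destruct (HKL X HX) as [Q [HQsmall [HQcofinal HQ]]]. pose proof HQ as [[enc Henc] _].
  (* indexing by the codes of the sets rather than by the sets keeps the index type in
     the universe of [L] *)
  exists {l : L | exists S, enc S = l}.
  exists (fun i x => exists S : {S | Q S}, enc S = proj1_sig i /\ proj1_sig S x).
  split; [|split].
  - apply le_lt_card with {S | Q S}; [|exact HQ].
    exists (fun i : {l : L | exists S, enc S = l} =>
      proj1_sig (constructive_indefinite_description _ (proj2_sig i))).
    intros [l Hl] [l' Hl']; simpl.
    destruct (constructive_indefinite_description _ Hl) as [S <-].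
    destruct (constructive_indefinite_description _ Hl') as [S' <-]; simpl.
    intros <-. apply sig_ext. reflexivity.
  - intros [l [S <-]].
    apply le_lt_card with {x | proj1_sig S x}; [|exact (HQsmall _ (proj2_sig S))].
    assert (Hin : forall x, (exists S', enc S' = enc S /\ proj1_sig S' x) -> proj1_sig S x).
    { intros x [S' [E Hx]]. rewrite <- (Henc _ _ E). exact Hx. }
    exists (fun y => exist _ (proj1_sig y) (Hin _ (proj2_sig y))).
    intros y y' E. apply sig_ext. exact (f_equal (@proj1_sig _ _) E).
  - intros U HU. destruct (HQcofinal U HU) as [T [HT HUT]].
    exists (exist _ (enc (exist _ T HT)) (ex_intro _ _ eq_refl)).
    intros x Hx. exists (exist _ T HT). exact (conj eq_refl (HUT x Hx)).
Qed.

(** * Limits of sets and of set-valued functors *)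

Lemma NT_ext (A : PreCat) (F G : Functor A TypeCat) (n m : NT F G) :
  (forall a x, eta n a x = eta m a x) -> n = m.
Proof.
  destruct n as [en nn], m as [em nm]; simpl; intros H.
  assert (en = em) as <-.
  { apply functional_extensionality_dep; intro a. apply functional_extensionality, H. }
  f_equal. apply proof_irrelevance.
Qed.

Lemma fmap_idm_apply {C : PreCat} {F : Functor C TypeCat} (HF : isFunctor F) {a : C}
  (x : F a) : fmap F (idm a) x = x.
Proof. rewrite (proj1 HF). reflexivity. Qed.

Lemma fmap_comp_apply {C : PreCat} {F : Functor C TypeCat} (HF : isFunctor F) {a b c : C}
  (f : hom a b) (g : hom b c) (x : F a) :
  fmap F (comp g f) x = fmap F g (fmap F f x).
Proof. rewrite (proj2 HF). reflexivity. Qed.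

Section TypeLimits.
Variables (J : PreCat) (D : Functor J TypeCat) (A : Type) (p : forall j, A -> D j).
Hypotheses (p_cone : isCone D A p) (p_limit : isLimit D A p).

Lemma type_limit_ext (z1 z2 : A) : (forall j, p j z1 = p j z2) -> z1 = z2.
Proof.
  intros Hz. destruct (@p_limit unit (fun j _ => p j z1)) as [u [_ Hu]].
  { intros j k f. apply functional_extensionality; intros [].
    exact (f_equal (fun h => h z1) (@p_cone j k f)). }
  assert (E1 : (fun _ : unit => z1) = u) by (apply Hu; reflexivity).
  assert (E2 : (fun _ : unit => z2) = u).
  { apply Hu; intro j. apply functional_extensionality; intros []. symmetry. apply Hz. }
  exact (f_equal (fun h => h tt) (eq_trans E1 (eq_sym E2))).
Qed.

Lemma type_limit_exists (n : forall j, D j) :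
  (forall j k (f : hom j k), fmap D f (n j) = n k) -> exists z, forall j, p j z = n j.
Proof.
  intros Hn. destruct (@p_limit unit (fun j _ => n j)) as [u [Hu _]].
  { intros j k f. apply functional_extensionality; intros []. apply Hn. }
  exists (u tt). intro j. exact (f_equal (fun h => h tt) (Hu j)).
Qed.

End TypeLimits.

(* The index category is given by a variable object type, so that threads, which
   quantify over its objects, stay in the universe of [TypeCat]. *)
Section PointwiseLimit.
Variables (A : PreCat) (I : Type) (homI : I -> I -> Type)
  (idI : forall i, homI i i) (compI : forall i j k, homI j k -> homI i j -> homI i k).
Let J : PreCat := {| ob := I; hom := homI; idm := idI; comp := compI |}.
Variable D : Functor J (FunCat A).

Definition thread (N : A) : Type :=
  {t : forall i : I, sfun (D i) N |
     forall i k (f : homI i k), eta (fmap D f) N (t i) = t k}.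

Definition thread_map (N N' : A) (psi : hom N N') (t : thread N) : thread N'.
Proof.
  refine (exist _ (fun i => fmap (sfun (D i)) psi (proj1_sig t i)) _).
  intros i k f. rewrite (natural (fmap D f)), (proj2_sig t i k f). reflexivity.
Defined.

Definition thread_functor : Functor A TypeCat :=
  {| fob := (thread : A -> TypeCat); fmap := thread_map |}.

Lemma thread_functor_functor : isFunctor thread_functor.
Proof.
  split.
  - intro N. apply functional_extensionality; intros [t Ht]. apply subset_eq_compat.
    apply functional_extensionality_dep; intro i.
    exact (f_equal (fun h => h (t i)) (proj1 (sfun_functor (D i)) N)).
  - intros N1 N2 N3 f g. apply functional_extensionality; intros [t Ht]. apply subset_eq_compat.
    apply functional_extensionality_dep; intro i.
    exact (f_equal (fun h => h (t i)) (proj2 (sfun_functor (D i)) N1 N2 N3 f g)).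
Qed.

Definition thread_limit : FunCat A := Build_SFObj thread_functor_functor.

Definition thread_proj (i : I) : @hom (FunCat A) thread_limit (D i) :=
  @Build_NT A thread_functor (sfun (D i)) (fun N (t : thread N) => proj1_sig t i)
    (fun _ _ _ _ => eq_refl).

Lemma thread_proj_cone : isCone D thread_limit thread_proj.
Proof. intros i k f. apply NT_ext. intros N t. exact (proj2_sig t i k f). Qed.

Lemma thread_proj_limit : isLimit D thread_limit thread_proj.
Proof.
  intros T q Hq.
  assert (Hthread : forall N (x : sfun T N) i k (f : homI i k),
             eta (fmap D f) N (eta (q i) N x) = eta (q k) N x).
  { intros N x i k f. exact (f_equal (fun n => eta n N x) (Hq i k f)). }
  pose (u := fun N (x : sfun T N) => exist _ (fun i => eta (q i) N x) (Hthread N x) : thread N).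
  assert (Hu : forall N N' (f : hom N N') x, u N' (fmap (sfun T) f x) = thread_map f (u N x)).
  { intros N N' f x. apply subset_eq_compat.
    apply functional_extensionality_dep; intro i. apply (natural (q i)). }
  exists (Build_NT (F := sfun T) (G := thread_functor) u Hu). split.
  - intro i. apply NT_ext. reflexivity.
  - intros u' Hu'. apply NT_ext. intros N x. apply sig_ext.
    apply functional_extensionality_dep; intro i. exact (f_equal (fun n => eta n N x) (Hu' i)).
Qed.

End PointwiseLimit.

(* [phi] exhibits the representable functor [hom M -] as a retract of [T]. *)
Definition universal_point (A : PreCat) (T : FunCat A) (M : A) (t0 : sfun T M) : Prop :=
  exists phi : forall N, sfun T N -> hom M N,
    (forall N N' (psi : hom N N') (t : sfun T N),
        phi N' (fmap (sfun T) psi t) = comp psi (phi N t)) /\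
    phi M t0 = idm M.
Arguments universal_point {A} T M t0.

Lemma universal_point_extend (A : PreCat) (T : FunCat A) (M : A) (t0 : sfun T M)
  (F : FunCat A) (u : sfun F M) :
  universal_point T M t0 -> exists h : hom T F, eta h M t0 = u.
Proof.
  intros [phi [phi_natural phi_t0]].
  assert (Hnat : forall N N' (psi : hom N N') (t : sfun T N),
             fmap (sfun F) (phi N' (fmap (sfun T) psi t)) u
             = fmap (sfun F) psi (fmap (sfun F) (phi N t) u)).
  { intros N N' psi t. rewrite phi_natural, (proj2 (sfun_functor F)). reflexivity. }
  exists (Build_NT (F := sfun T) (G := sfun F) (fun N t => fmap (sfun F) (phi N t) u) Hnat).
  simpl. rewrite phi_t0, (proj1 (sfun_functor F)). reflexivity.
Qed.

Lemma generating_of_universal_points (A : PreCat) (P : FunCat A -> Prop) :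
  (forall M : A, exists (T : FunCat A) (t0 : sfun T M), P T /\ universal_point T M t0) ->
  generating P.
Proof.
  intros Huniv F G f g Hfg.
  assert (Hsep : exists M u, eta f M u <> eta g M u).
  { apply NNPP; intro Hnone. apply Hfg, NT_ext. intros M u.
    apply NNPP; intro Hne. eauto. }
  destruct Hsep as [M [u Hu]].
  destruct (Huniv M) as [T [t0 [HT Ht0]]].
  destruct (universal_point_extend u Ht0) as [h Hh].
  exists T. split; [exact HT|]. exists h. intro E. apply Hu. rewrite <- Hh.
  exact (f_equal (fun n => eta n M t0) E).
Qed.

(** * The diagram of a set of pointed arrows *)

Section ElementShape.
Variables (C : PreCat) (P : Functor C TypeCat).

Definition Elt : Type := {a : C & (P a : Type)}.
Definition Arr : Type := {f : Mor C & (P (projT1 f) : Type)}.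

Definition arr_dom (s : Arr) : C := projT1 (projT1 s).
Definition arr_cod (s : Arr) : C := projT1 (projT2 (projT1 s)).
Definition arr_hom (s : Arr) : hom (arr_dom s) (arr_cod s) := projT2 (projT2 (projT1 s)).
Definition arr_pt (s : Arr) : P (arr_dom s) := projT2 s.
Definition arr_src (s : Arr) : Elt := existT _ (arr_dom s) (arr_pt s).
Definition arr_tgt (s : Arr) : Elt := existT _ (arr_cod s) (fmap P (arr_hom s) (arr_pt s)).

Definition pointed_arr (a b : C) (f : hom a b) (x : P a) : Arr :=
  existT (fun f : Mor C => (P (projT1 f) : Type)) (existT _ a (existT _ b f)) x.

(* Each pointed arrow [s] is a vertex with one edge to each of its endpoints; as no
   two edges compose, the shape is a category without any composition to check. *)
Inductive shape_hom : Arr + Elt -> Arr + Elt -> Type :=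
| sh_id o : shape_hom o o
| sh_src s : shape_hom (inl s) (inr (arr_src s))
| sh_tgt s : shape_hom (inl s) (inr (arr_tgt s)).

Definition shape_comp (x y z : Arr + Elt) (g : shape_hom y z) (f : shape_hom x y) :
  shape_hom x z.
Proof.
  destruct f as [o | s | s]; [exact g | |].
  - remember (inr (arr_src s)) as y eqn:Hy.
    destruct g as [o | s' | s']; [subst; exact (sh_src s) | discriminate | discriminate].
  - remember (inr (arr_tgt s)) as y eqn:Hy.
    destruct g as [o | s' | s']; [subst; exact (sh_tgt s) | discriminate | discriminate].
Defined.

Lemma shape_comp_id_l (x y : Arr + Elt) (f : shape_hom x y) : shape_comp (sh_id y) f = f.
Proof. destruct f; reflexivity. Qed.

Definition in_shape (S : Arr -> Prop) (o : Arr + Elt) : Prop :=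
  match o with
  | inl s => S s
  | inr e => exists s, S s /\ (arr_src s = e \/ arr_tgt s = e)
  end.

Lemma arr_src_in (S : Arr -> Prop) (s : Arr) : S s -> in_shape S (inr (arr_src s)).
Proof. intros Hs. exists s. auto. Qed.

Lemma arr_tgt_in (S : Arr -> Prop) (s : Arr) : S s -> in_shape S (inr (arr_tgt s)).
Proof. intros Hs. exists s. auto. Qed.

Lemma in_shape_mono (S T : Arr -> Prop) (o : Arr + Elt) :
  (forall s, T s -> S s) -> in_shape T o -> in_shape S o.
Proof.
  intros HTS. destruct o as [s | e]; simpl; [apply HTS|].
  intros [s [Hs He]]. exists s. auto.
Qed.

Definition Shape (S : Arr -> Prop) : PreCat :=
  {| ob := {o | in_shape S o};
     hom := fun x y => shape_hom (proj1_sig x) (proj1_sig y);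
     idm := fun x => sh_id (proj1_sig x);
     comp := fun x y z g f => shape_comp g f |}.

Definition shape_ob (o : Arr + Elt) : C :=
  match o with inl s => arr_dom s | inr e => projT1 e end.

Definition shape_map (x y : Arr + Elt) (g : shape_hom x y) : hom (shape_ob x) (shape_ob y) :=
  match g in shape_hom x y return hom (shape_ob x) (shape_ob y) with
  | sh_id o => idm (shape_ob o)
  | sh_src s => idm (arr_dom s)
  | sh_tgt s => arr_hom s
  end.

Definition shape_diagram (S : Arr -> Prop) : Functor (Shape S) C :=
  {| fob := fun o : Shape S => shape_ob (proj1_sig o); fmap := fun x y g => shape_map g |}.

Lemma shape_cat (S : Arr -> Prop) : isCat (Shape S).
Proof.
  split; [|split]; simpl.
  - intros a b f. apply shape_comp_id_l.
  - reflexivity.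
  - intros [a Ha] [b Hb] [c Hc] [d Hd] f g h; simpl in *.
    destruct f; [reflexivity| |]; dependent destruction g; dependent destruction h; reflexivity.
Qed.

Lemma shape_diagram_functor (S : Arr -> Prop) : isCat C -> isFunctor (shape_diagram S).
Proof.
  intros [Hl [Hr _]]. split; simpl; [reflexivity|].
  intros [a Ha] [b Hb] [c Hc] f g; simpl in *.
  destruct f; simpl; [rewrite Hr; reflexivity| |];
    dependent destruction g; simpl; rewrite Hl; reflexivity.
Qed.

Definition shape_tag (x y : Arr + Elt) (g : shape_hom x y) : bool * bool :=
  match g with sh_id _ => (true, true) | sh_src _ => (false, true) | sh_tgt _ => (false, false) end.

Lemma shape_mor_small (K : Type) (S : Arr -> Prop) :
  regular_infinite K -> lt_card {s | S s} K -> lt_card (Mor (Shape S)) K.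
Proof.
  intros HK HS.
  assert (Hbool : lt_card bool K) by exact (lt_card_bool (proj1 HK)).
  assert (Helt : lt_card {e | in_shape S (inr e)} K).
  { pose (endpoint := fun (i : {s | S s} * bool) =>
            if snd i then arr_src (proj1_sig (fst i)) else arr_tgt (proj1_sig (fst i))).
    assert (Hend : forall e, in_shape S (inr e) -> exists i, endpoint i = e).
    { intros e [s [Hs [E | E]]]; [exists (exist _ s Hs, true) | exists (exist _ s Hs, false)];
        exact E. }
    apply le_lt_card with {e | exists i, endpoint i = e}.
    - exists (fun e => exist _ (proj1_sig e) (Hend _ (proj2_sig e))).
      intros e e' E. apply sig_ext. exact (f_equal (@proj1_sig _ _) E).
    - apply lt_card_union; [exact HK | exact (lt_card_prod HK HS Hbool) |].
      intro i. exact (lt_card_singleton _ (proj1 HK)). }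
  assert (Hob : lt_card (Shape S) K).
  { apply le_lt_card with ({s | S s} + {e | in_shape S (inr e)})%type;
      [|exact (lt_card_sum HK HS Helt)].
    exists (fun o : Shape S =>
      match o return ({s | S s} + {e | in_shape S (inr e)})%type with
      | exist _ (inl s) H => inl (exist _ s H)
      | exist _ (inr e) H => inr (exist _ e H)
      end).
    intros [[s | e] H] [[s' | e'] H'] E; try discriminate E;
      apply sig_ext; injection E as <-; reflexivity. }
  apply le_lt_card with (Shape S * (bool * bool))%type;
    [|exact (lt_card_prod HK Hob (lt_card_prod HK Hbool Hbool))].
  exists (fun m : Mor (Shape S) => (projT1 m, shape_tag (projT2 (projT2 m)))).
  intros [[x Hx] [[y Hy] g]] [[x' Hx'] [[y' Hy'] g']] E; simpl in *.
  pose proof (f_equal (fun m => proj1_sig (fst m)) E) as Ex; simpl in Ex; subst x'.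
  rewrite (proof_irrelevance _ Hx' Hx).
  pose proof (f_equal snd E) as Etag; simpl in Etag.
  dependent destruction g; dependent destruction g'; try discriminate Etag;
    rewrite (proof_irrelevance _ Hy' Hy); reflexivity.
Qed.

Record ShapeLimit (S : Arr -> Prop) := {
  shape_apex : C;
  shape_proj : forall o : Shape S, hom shape_apex (shape_diagram S o);
  shape_proj_cone : isCone (shape_diagram S) shape_apex shape_proj;
  shape_proj_limit : isLimit (shape_diagram S) shape_apex shape_proj }.

Lemma shape_limit_inhabited (K : Type) (S : Arr -> Prop) :
  regular_infinite K -> kappa_lex_cat K C -> lt_card {s | S s} K -> inhabited (ShapeLimit S).
Proof.
  intros HK [HC Hlim] HS.
  destruct (Hlim (Shape S) (shape_diagram S) (shape_cat S) (shape_mor_small HK HS)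
              (shape_diagram_functor S HC)) as [a [p [Hcone Hlimit]]].
  exact (inhabits (Build_ShapeLimit Hcone Hlimit)).
Qed.

Definition elt_proj (S : Arr -> Prop) (l : ShapeLimit S) (e : Elt) (He : in_shape S (inr e)) :
  hom (shape_apex l) (projT1 e) :=
  shape_proj l (exist _ (inr e) He).
Arguments elt_proj {S} l e He.

Lemma elt_proj_irrel (S : Arr -> Prop) (l : ShapeLimit S) (e : Elt)
  (He He' : in_shape S (inr e)) : elt_proj l e He = elt_proj l e He'.
Proof. rewrite (proof_irrelevance _ He He'). reflexivity. Qed.

Section Projections.
Hypothesis HC : isCat C.
Variables (S : Arr -> Prop) (l : ShapeLimit S).

Lemma shape_proj_arr (s : Arr) (Hs : S s) :
  shape_proj l (exist _ (inl s) Hs) = elt_proj l (arr_src s) (arr_src_in Hs).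
Proof.
  pose proof (shape_proj_cone l (j := exist _ (inl s) Hs)
                (k := exist _ (inr (arr_src s)) (arr_src_in Hs)) (sh_src s)) as E.
  simpl in E. rewrite (proj1 HC) in E. exact E.
Qed.

Lemma elt_proj_arr (s : Arr) (Hs : S s) H1 H2 :
  comp (arr_hom s) (elt_proj l (arr_src s) H1) = elt_proj l (arr_tgt s) H2.
Proof.
  rewrite (elt_proj_irrel l H1 (arr_src_in Hs)), <- shape_proj_arr.
  exact (shape_proj_cone l (j := exist _ (inl s) Hs) (k := exist _ (inr (arr_tgt s)) H2)
           (sh_tgt s)).
Qed.

End Projections.

Lemma shape_limit_restrict (S T : Arr -> Prop) (lS : ShapeLimit S) (lT : ShapeLimit T) :
  (forall s, T s -> S s) ->
  exists r : hom (shape_apex lS) (shape_apex lT),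
    forall e He He', comp (elt_proj lT e He) r = elt_proj lS e He'.
Proof.
  intros HTS.
  destruct (shape_proj_limit lT (b := shape_apex lS)
              (q := fun o => shape_proj lS (exist _ _ (in_shape_mono HTS (proj2_sig o)))))
    as [r [Hr _]].
  { intros x y f. exact (shape_proj_cone lS (j := exist _ _ _) (k := exist _ _ _) f). }
  exists r. intros e He He'.
  exact (eq_trans (Hr (exist _ (inr e) He)) (elt_proj_irrel lS _ He')).
Qed.

Section ModelPoints.
Variables (K : Type) (N : Functor C TypeCat).
Hypotheses (HK : regular_infinite K) (HC : isCat C) (HN : isFunctor N)
  (HNlex : kappa_lex_functor K N).
Variables (S : Arr -> Prop) (l : ShapeLimit S).
Hypothesis HS : lt_card {s | S s} K.

Lemma model_shape_cone :
  isCone (fcomp N (shape_diagram S)) (N (shape_apex l)) (fun o => fmap N (shape_proj l o)).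
Proof.
  intros x y f. rewrite <- (shape_proj_cone l f). exact (eq_sym (proj2 HN _ _ _ _ _)).
Qed.

Lemma model_shape_limit :
  isLimit (fcomp N (shape_diagram S)) (N (shape_apex l)) (fun o => fmap N (shape_proj l o)).
Proof.
  exact (@HNlex (Shape S) (shape_diagram S) (shape_cat S) (shape_mor_small HK HS)
           (shape_diagram_functor S HC) _ _ (shape_proj_cone l) (shape_proj_limit l)).
Qed.

Lemma model_points_ext (z1 z2 : N (shape_apex l)) :
  (forall e He, fmap N (elt_proj l e He) z1 = fmap N (elt_proj l e He) z2) -> z1 = z2.
Proof.
  intros Hz. apply (type_limit_ext model_shape_cone model_shape_limit).
  intros [[s | e] Ho]; [|apply Hz].
  simpl. rewrite (shape_proj_arr HC l Ho). exact (Hz (arr_src s) (arr_src_in Ho)).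
Qed.

Lemma model_points_exist (n : forall e, in_shape S (inr e) -> N (projT1 e)) :
  (forall s (Hs : S s) H1 H2, fmap N (arr_hom s) (n (arr_src s) H1) = n (arr_tgt s) H2) ->
  exists z, forall e He, fmap N (elt_proj l e He) z = n e He.
Proof.
  intros Hn.
  pose (m := fun o : Shape S =>
    match o as o return N (shape_diagram S o) with
    | exist _ (inl s) Hs => n (arr_src s) (arr_src_in Hs)
    | exist _ (inr e) He => n e He
    end).
  destruct (type_limit_exists model_shape_limit (n := m)) as [z Hz].
  - intros [x Hx] [y Hy] f. simpl in f.
    dependent destruction f; simpl; [| | exact (Hn s Hx _ _)].
    + rewrite (proof_irrelevance _ Hx Hy). exact (fmap_idm_apply HN _).
    + rewrite (proof_irrelevance _ (arr_src_in Hx) Hy). exact (fmap_idm_apply HN _).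
  - exists z. intros e He. exact (Hz (exist _ (inr e) He)).
Qed.

End ModelPoints.

End ElementShape.
Arguments elt_proj {C P S} l e He.

(** * A cofiltered limit of evaluations *)

Section EvaluationLimit.
Variables (K L : Type) (C : PreCat) (Eix : Type)
  (cod : Eix -> C) (fam : forall e d, hom d (cod e) -> Prop).
Hypotheses (HK : regular_infinite K) (HL : regular_infinite L) (HC : isCat C).
Variable M : ModObj K L cod fam.
Variables (I : Type) (piece : I -> Arr (mfun M) -> Prop).
Hypotheses (I_small : lt_card I L) (piece_small : forall i, lt_card {s | piece i s} K)
  (piece_cofinal : forall U, lt_card {s | U s} K -> exists i, forall s, U s -> piece i s).
Variable lim : forall i, ShapeLimit (piece i).

Let Mod := ModCat K L cod fam.

Definition index_cat : PreCat :=
  {| ob := I;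
     hom := fun i k => forall s, piece k s -> piece i s;
     idm := fun i s h => h;
     comp := fun i j k g f s h => f s (g s h) |}.

Lemma index_cat_cat : isCat index_cat.
Proof. split; [|split]; intros; simpl in *; apply proof_irrelevance. Qed.

Lemma index_cat_cofiltered : kappa_cofiltered K index_cat.
Proof.
  intros J D HJ HJmor HD.
  assert (HJob : lt_card J K).
  { apply le_lt_card with (Mor J); [|exact HJmor].
    exists (fun j => existT (fun a => {b : J & hom a b}) j (existT _ j (idm j))).
    intros j j' E. exact (f_equal (@projT1 _ _) E). }
  destruct (@piece_cofinal (fun s => exists j, piece (D j) s)) as [i Hi].
  { exact (lt_card_union HK HJob (fun j => piece_small (D j))). }
  exists i, (fun j s h => Hi s (ex_intro _ j h)).
  intros j k f. simpl. apply proof_irrelevance.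
Qed.

Lemma index_cat_mor_small : lt_card (Mor index_cat) L.
Proof.
  apply le_lt_card with (I * I)%type; [|exact (lt_card_prod HL I_small I_small)].
  exists (fun m : Mor index_cat => (projT1 m, projT1 (projT2 m))).
  intros [i [k h]] [i' [k' h']] E. injection E as <- <-. simpl in h, h'.
  rewrite (proof_irrelevance _ h h'). reflexivity.
Qed.

Definition restriction (i k : index_cat) (h : hom i k) :
  hom (shape_apex (lim i)) (shape_apex (lim k)) :=
  proj1_sig (constructive_indefinite_description _ (shape_limit_restrict (lim i) (lim k) h)).

Lemma model_restriction (N : Mod) (i k : index_cat) (h : hom i k) e He He'
  (z : mfun N (shape_apex (lim i))) :
  fmap (mfun N) (elt_proj (lim k) e He) (fmap (mfun N) (restriction h) z)
  = fmap (mfun N) (elt_proj (lim i) e He') z.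
Proof.
  unfold restriction. destruct (constructive_indefinite_description _ _) as [r Hr]; simpl.
  rewrite <- (Hr e He He'). symmetry. exact (fmap_comp_apply (mfun_functor N) _ _ _).
Qed.

Lemma model_points_ext_at (N : Mod) (i : I) (z1 z2 : mfun N (shape_apex (lim i))) :
  (forall e He, fmap (mfun N) (elt_proj (lim i) e He) z1
                = fmap (mfun N) (elt_proj (lim i) e He) z2) -> z1 = z2.
Proof.
  apply (model_points_ext HK HC (mfun_functor N) (@mfun_lex _ _ _ _ _ _ N) (l := lim i)
           (piece_small i)).
Qed.

Definition ev_restriction (i k : index_cat) (h : hom i k) :
  @hom (FunCat Mod) (ev K L cod fam (shape_apex (lim i)))
    (ev K L cod fam (shape_apex (lim k))) :=
  @Build_NT Mod (sfun (ev K L cod fam (shape_apex (lim i))))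
    (sfun (ev K L cod fam (shape_apex (lim k))))
    (fun N (z : mfun N (shape_apex (lim i))) => fmap (mfun N) (restriction h) z)
    (fun N N' psi z => eq_sym (natural psi _ _ (restriction h) z)).

Definition ev_diagram : Functor index_cat (FunCat Mod) :=
  @Build_Functor index_cat (FunCat Mod) (fun i : I => ev K L cod fam (shape_apex (lim i)))
    ev_restriction.

Lemma ev_diagram_functor : isFunctor ev_diagram.
Proof.
  split.
  - intros i. apply NT_ext. intros N z. apply model_points_ext_at. intros e He.
    exact (model_restriction _ He He z).
  - intros i j k f g. apply NT_ext. intros N z. apply model_points_ext_at. intros e He. simpl.
    pose (Hj := in_shape_mono g He). pose (Hi := in_shape_mono f Hj).
    rewrite (model_restriction _ He Hi), (model_restriction g He Hj), (model_restriction f Hj Hi).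
    reflexivity.
Qed.

Definition ev_limit : FunCat Mod := thread_limit ev_diagram.

Lemma ev_limit_closure : ev_closure K L cod fam ev_limit.
Proof.
  exact (@evc_lim K L C Eix cod fam index_cat ev_diagram ev_limit (thread_proj ev_diagram)
           index_cat_cat index_cat_cofiltered index_cat_mor_small
           ev_diagram_functor (fun i => evc_base _ _ _ _)
           (@thread_proj_cone Mod I _ _ _ ev_diagram) (@thread_proj_limit Mod I _ _ _ ev_diagram)).
Qed.

Lemma elt_covered (e : Elt (mfun M)) : exists i, in_shape (piece i) (inr e).
Proof.
  destruct e as [a x].
  destruct (@piece_cofinal (fun s => pointed_arr (idm a) x = s)) as [i Hi].
  { exact (lt_card_singleton _ (proj1 HK)). }
  exists i, (pointed_arr (idm a) x). split; [exact (Hi _ eq_refl) | left; reflexivity].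
Qed.

Definition coord_index (e : Elt (mfun M)) : I :=
  proj1_sig (constructive_indefinite_description _ (elt_covered e)).

Lemma coord_index_spec (e : Elt (mfun M)) : in_shape (piece (coord_index e)) (inr e).
Proof. exact (proj2_sig (constructive_indefinite_description _ (elt_covered e))). Qed.

Definition coord (N : Mod) (t : thread ev_diagram N) (e : Elt (mfun M)) : mfun N (projT1 e) :=
  fmap (mfun N) (elt_proj (lim (coord_index e)) e (coord_index_spec e))
    (proj1_sig t (coord_index e)).

Lemma coord_any (N : Mod) (t : thread ev_diagram N) (e : Elt (mfun M)) (i : I)
  (He : in_shape (piece i) (inr e)) :
  coord t e = fmap (mfun N) (elt_proj (lim i) e He) (proj1_sig t i).
Proof.
  destruct (@piece_cofinal
              (fun s => exists b : bool, if b then piece (coord_index e) s else piece i s))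
    as [k Hk].
  { apply (lt_card_union HK (lt_card_bool (proj1 HK))). intros []; apply piece_small. }
  pose (h1 := (fun s hs => Hk s (ex_intro _ true hs)) : @hom index_cat k (coord_index e)).
  pose (h2 := (fun s hs => Hk s (ex_intro _ false hs)) : @hom index_cat k i).
  pose (Hek := in_shape_mono h2 He).
  unfold coord. rewrite <- (proj2_sig t k _ h1), <- (proj2_sig t k i h2). simpl.
  rewrite (model_restriction h1 _ Hek), (model_restriction h2 _ Hek). reflexivity.
Qed.

Lemma coord_natural (N : Mod) (t : thread ev_diagram N) (a b : C) (f : hom a b)
  (x : mfun M a) :
  coord t (existT _ b (fmap (mfun M) f x)) = fmap (mfun N) f (coord t (existT _ a x)).
Proof.
  destruct (@piece_cofinal (fun s => pointed_arr f x = s)) as [i Hi].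
  { exact (lt_card_singleton _ (proj1 HK)). }
  pose proof (Hi _ eq_refl) as Hs.
  rewrite (coord_any t (e := existT _ b (fmap (mfun M) f x)) (arr_tgt_in Hs)),
    (coord_any t (e := existT _ a x) (arr_src_in Hs)).
  rewrite <- (fmap_comp_apply (mfun_functor N)).
  exact (f_equal (fun h => fmap (mfun N) h (proj1_sig t i))
           (eq_sym (elt_proj_arr HC (lim i) Hs _ _))).
Qed.

Definition model_map (N : Mod) (t : thread ev_diagram N) : @hom Mod M N :=
  @Build_NT C (mfun M) (mfun N) (fun a x => coord t (existT _ a x)) (coord_natural t).

Lemma model_map_natural (N N' : Mod) (psi : hom N N') (t : thread ev_diagram N) :
  model_map (thread_map psi t) = comp psi (model_map t).
Proof. apply NT_ext. intros a x. symmetry. apply (natural psi). Qed.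

Lemma canonical_point_exists (i : I) :
  exists z, forall e He, fmap (mfun M) (elt_proj (lim i) e He) z = projT2 e.
Proof.
  apply (model_points_exist HK HC (mfun_functor M) (@mfun_lex _ _ _ _ _ _ M) (lim i)
           (piece_small i)).
  reflexivity.
Qed.

Definition canonical_point (i : I) : mfun M (shape_apex (lim i)) :=
  proj1_sig (constructive_indefinite_description _ (canonical_point_exists i)).

Lemma canonical_point_spec (i : I) e He :
  fmap (mfun M) (elt_proj (lim i) e He) (canonical_point i) = projT2 e.
Proof.
  exact (proj2_sig (constructive_indefinite_description _ (canonical_point_exists i)) e He).
Qed.

Lemma canonical_point_restriction (i k : index_cat) (h : hom i k) :
  fmap (mfun M) (restriction h) (canonical_point i) = canonical_point k.
Proof.
  apply model_points_ext_at. intros e He.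
  rewrite (model_restriction h He (in_shape_mono h He)), !canonical_point_spec. reflexivity.
Qed.

Definition canonical_thread : thread ev_diagram M :=
  exist _ canonical_point canonical_point_restriction.

Lemma model_map_canonical : model_map canonical_thread = @idm Mod M.
Proof.
  apply NT_ext. intros a x. exact (canonical_point_spec (coord_index_spec (existT _ a x))).
Qed.

Lemma ev_limit_universal_point : universal_point ev_limit M canonical_thread.
Proof. exists model_map. exact (conj model_map_natural model_map_canonical). Qed.

End EvaluationLimit.

Theorem mainTheorem12 (K L : Type) (C : PreCat) (Eix : Type)
  (cod : Eix -> C) (fam : forall e d, hom d (cod e) -> Prop) :
  regular_infinite K -> regular_infinite L ->
  sharply_less K L -> lam_lt_lam_eq L ->
  kappa_site K cod fam ->
  lt_card (Mor C) L -> lt_card Eix L ->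
  generating (C := FunCat (ModCat K L cod fam)) (ev_closure K L cod fam).
Proof.
  intros HK HL HKL _ [Hlex _] HMor _. pose proof (proj1 Hlex) as HC.
  apply generating_of_universal_points. intro M.
  assert (HArr : lt_card (Arr (mfun M)) L).
  { exact (proj2 HL _ _ HMor (fun f => mfun_small M (projT1 f))). }
  destruct (sharply_less_indexed_cofinal HKL HArr) as [I [piece [HI [Hsmall Hcofinal]]]].
  pose (lim := fun i => epsilon (shape_limit_inhabited HK Hlex (Hsmall i)) (fun _ => True)).
  exists (ev_limit lim), (canonical_thread HK HC Hsmall lim).
  exact (conj (ev_limit_closure HK HL HC HI Hsmall Hcofinal lim)
              (ev_limit_universal_point HK HC Hsmall Hcofinal lim)).
Qed.
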